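(* Let $r(t) \in \mathbb{Z}[t]$ be a good polynomial. Then $r(1) \cdot \operatorname{Cong}(r(t)) \cdot \operatorname{Discr}_\ast(r(t)) \cdot \operatorname{Prod}_\ast(r(t)) \neq 0$.
   Context: Here $\mathbb{N} = \{1,2,3,\dots\}$. A polynomial $r(t) \in \mathbb{Z}[t]$ is bad if there exist $u \in \mathbb{N}$ and $s(t) \in \mathbb{Z}[t]\setminus \mathbb{Z}$ such that $s(t^{u+1})$ divides $r(0)\cdot r(1)\cdot r(t)$ in $\mathbb{Z}[t]$; otherwise $r(t)$ is good. For $r(t) = \sum_i a_i t^i \in \mathbb{Z}[t]$ and integers $u > j \ge 0$, let $r_{u,j}(t) := \sum_{i \equiv j \bmod u} a_i t^i$. The periodic congruence number $\operatorname{Cong}(r(t))$ is the non-negative generator of the ideal $\mathbb{Z} \cap \bigcap_{1 < u \le \deg(r(t))+1} \big(r_{u,0}(t)\mathbb{Z}[t] + \cdots + r_{u,u-1}(t)\mathbb{Z}[t]\big)$ of $\mathbb{Z}$. If $r(t)$ is constant, $\operatorname{Discr}_\ast(r(t)) := r(t)$ and $\operatorname{Prod}_\ast(r(t)) := 1$. Otherwise let $d = \deg r$, $a$ the leading coefficient, $\lambda_1,\dots,\lambda_l \in \overline{\mathbb{Q}}$ the distinct roots with multiplicities $m_1,\dots,m_l$, $m = \max_i m_i$, and set $\operatorname{Discr}_\ast(r(t)) := a^{1+2d^2}\,(m-1)!\,\prod_{1\le i\ne j\le l}(\lambda_i-\lambda_j)^m$ and $\operatorname{Prod}_\ast(r(t))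 := a^{2d^3}\prod_{1\le i,j\le l,\ r(\lambda_i\lambda_j)\neq 0} r(\lambda_i\lambda_j)$. *)

From Stdlib Require Import ClassicalEpsilon.
From mathcomp Require Import all_boot all_order all_algebra all_field.
Set Implicit Arguments. Unset Strict Implicit. Unset Printing Implicit Defensive.
Import Order.TTheory GRing.Theory Num.Theory.
Local Open Scope ring_scope.

Definition bad (r : {poly int}) : Prop :=
  exists (u : nat) (s : {poly int}), (0 < u)%N /\ (1 < size s)%N /\
    exists q : {poly int}, (r.[0] * r.[1]) *: r = q * (s \Po 'X^(u.+1)).

Definition good (r : {poly int}) : Prop := ~ bad r.

Definition rpart (r : {poly int}) (u j : nat) : {poly int} :=
  \poly_(i < size r) (if (i %% u == j)%N then r`_i else 0).

(* the ideal Z ∩ ⋂_{1<u<=deg r + 1} (r_{u,0}Z[t] + ... + r_{u,u-1}Z[t]) *)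
Definition cong_ideal (r : {poly int}) (n : int) : Prop :=
  forall u : nat, (1 < u)%N -> (u <= (size r).-1 + 1)%N ->
    exists q : nat -> {poly int}, n%:P = \sum_(j < u) rpart r u j * q j.

Definition Cong (r : {poly int}) : int :=
  epsilon (inhabits 0) (fun c : int =>
    0 <= c /\ forall n, cong_ideal r n <-> (c %| n)%Z).

Definition rC (r : {poly int}) : {poly algC} := map_poly (fun z : int => z%:~R) r.

Definition droots (p : {poly algC}) : seq algC :=
  epsilon (inhabits [::]) (fun s : seq algC =>
    uniq s /\ forall x, root p x = (x \in s)).

Definition Discr_star (r : {poly int}) : algC :=
  if (size r <= 1)%N then (r`_0)%:~R
  else
    let d := (size r).-1 in
    let a : algC := (lead_coef r)%:~R in
    let s := droots (rC r) in
    let m := (\max_(x <- s) mup x (rC r))%N in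
    a ^+ (1 + 2 * d ^ 2) * ((m.-1)`!)%:R *
      \prod_(x <- s) \prod_(y <- s | x != y) (x - y) ^+ m.

Definition Prod_star (r : {poly int}) : algC :=
  if (size r <= 1)%N then 1
  else
    let d := (size r).-1 in
    let a : algC := (lead_coef r)%:~R in
    let s := droots (rC r) in
    a ^+ (2 * d ^ 3) *
      \prod_(x <- s) \prod_(y <- s | (rC r).[x * y] != 0) (rC r).[x * y].

(* For 1 < u, write r_{u,j}(t) = t^j R_j(t^u).  Over Q[t] the ideal generated
   by R_0, t R_1, ..., t R_{u-1} is principal, generated by some D.  If D is a
   nonzero constant, substituting t^u puts a nonzero constant into the Q[t]-ideal
   of the r_{u,j}, and clearing denominators a nonzero integer into their
   Z[t]-ideal.  Otherwise D is prime to t, because R_0(0) = r(0), so D divides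
   every R_j; then D(t^u) divides r and, by Gauss's lemma, r is bad.  Hence
   Cong r <> 0 for good r, while Discr_* and Prod_* are products of nonzero
   factors. *)

From Stdlib Require Import ClassicalEpsilon Wf_nat.
From mathcomp Require Import all_boot all_order all_algebra all_field.
Set Implicit Arguments. Unset Strict Implicit. Unset Printing Implicit Defensive.
Import Order.TTheory GRing.Theory Num.Theory.
Local Open Scope ring_scope.

Definition in_poly_ideal (R : comNzRingType) (f : nat -> {poly R}) (n : nat)
    (p : {poly R}) : Prop :=
  exists g : nat -> {poly R}, p = \sum_(j < n) f j * g j.

Lemma in_poly_idealD (R : comNzRingType) (f : nat -> {poly R}) n a b p q :
  in_poly_ideal f n p -> in_poly_ideal f n q -> in_poly_ideal f n (a * p + b * q).
Proof.
move=> [g ->] [h ->]; exists (fun j => a * g j + b * h j).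
rewrite !mulr_sumr -big_split /=; apply: eq_bigr => j _.
by rewrite mulrDr mulrCA [b * _]mulrCA.
Qed.

Lemma in_poly_idealMl (R : comNzRingType) (f : nat -> {poly R}) n a p :
  in_poly_ideal f n p -> in_poly_ideal f n (a * p).
Proof. by move=> fp; have := in_poly_idealD a 0 fp fp; rewrite mul0r addr0. Qed.

Lemma bezout_common_divisor (F : fieldType) (f : nat -> {poly F}) n :
  exists2 g, in_poly_ideal f n g & forall i, (i < n)%N -> g %| f i.
Proof.
elim: n => [|n [g [x g_def] g_dvd]].
  by exists 0 => //; exists (fun=> 0); rewrite big_ord0.
have [[a b] /= gcd_eqp] := Bezoutp g (f n).
exists (a * g + b * f n).
  exists (fun j => if (j < n)%N then a * x j else b).
  rewrite big_ord_recr /= ltnn g_def mulr_sumr [b * _]mulrC; congr (_ + _).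
  by apply: eq_bigr => j _; rewrite ltn_ord mulrCA.
move=> i; rewrite (eqp_dvdl _ gcd_eqp) ltnS leq_eqVlt => /orP[/eqP -> | lt_in].
  exact: dvdp_gcdr.
exact: dvdp_trans (dvdp_gcdl _ _) (g_dvd i lt_in).
Qed.

Local Notation pZtoQ := (map_poly (intr : int -> rat)).

Lemma rat_polys_scale (y : nat -> {poly rat}) n :
  exists2 N : int, N != 0 & exists g : nat -> {poly int},
    forall j, (j < n)%N -> N%:~R *: y j = pZtoQ (g j).
Proof.
elim: n => [|n [N N_neq0 [g g_def]]]; first by exists 1 => //; exists (fun=> 0).
have [h [a a_neq0 yn_def]] := rat_poly_scale (y n).
exists (N * a); first by rewrite mulf_neq0.
exists (fun j => if j == n then N *: h else a *: g j) => j.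
rewrite ltnS leq_eqVlt => /orP[/eqP -> | lt_jn].
  by rewrite eqxx yn_def scalerA intrM -mulrA mulfV ?intr_eq0 // mulr1 linearZ.
by rewrite (ltn_eqF lt_jn) intrM mulrC -scalerA g_def // linearZ.
Qed.

Lemma int_const_in_ideal (f : nat -> {poly int}) n (c : rat) :
  c != 0 -> in_poly_ideal (pZtoQ \o f) n c%:P ->
  exists2 N : int, N != 0 & in_poly_ideal f n N%:P.
Proof.
move=> c_neq0 [y c_def]; have [N N_neq0 [g g_def]] := rat_polys_scale y n.
pose P := \sum_(j < n) f j * g j.
have P_const : pZtoQ P = (N%:~R * c)%:P.
  rewrite polyCM mul_polyC c_def scaler_sumr rmorph_sum /=.
  by apply: eq_bigr => j _; rewrite scalerAr g_def // rmorphM.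
have P_size : size P = 1%N.
  by rewrite -size_rat_int_poly P_const size_polyC mulf_neq0 ?intr_eq0.
have lead_P : lead_coef P = P`_0 by rewrite lead_coefE P_size.
exists P`_0; first by rewrite -lead_P lead_coef_eq0 -size_poly_eq0 P_size.
by exists g; rewrite -(size1_polyC (eq_leq P_size)).
Qed.

Lemma int_ideal_principal (S : int -> Prop) :
  (forall a b x y, S a -> S b -> S (x * a + y * b)) -> (exists a, S a) ->
  exists2 c : int, 0 <= c & forall n, S n <-> (c %| n)%Z.
Proof.
move=> S_lin [a Sa].
have S_mul x b : S b -> S (x * b).
  by move=> Sb; have := S_lin _ _ x 0 Sb Sb; rewrite mul0r addr0.
have S_abs n : S n -> S `|n|%N by rewrite abszEsign; apply: S_mul.
have [|no_pos] := classic (exists m, (0 < m)%N /\ S m).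
  move/(@dec_inh_nat_subset_has_unique_least_element _ (fun m => classic _)).
  move=> [c [[[c_gt0 Sc] c_min] _]]; exists c => // n.
  split=> [Sn | /dvdzP[q ->]]; last exact: S_mul.
  have S_rem : S (n %% c)%Z.
    have -> : (n %% c)%Z = 1 * n + - (n %/ c)%Z * c.
      by rewrite mul1r mulNr {2}(divz_eq n c) addrC addKr.
    exact: S_lin.
  have rem_ge0 : 0 <= (n %% c)%Z by rewrite modz_ge0 // eqz_nat -lt0n.
  have rem_lt : (n %% c)%Z < c by rewrite ltz_pmod // ltz_nat.
  apply/dvdz_mod0P; apply: contraTeq rem_lt => rem_neq0.
  rewrite -leNgt -(gez0_abs rem_ge0) lez_nat; apply/ssrnat.leP/c_min.
  by split; [rewrite absz_gt0 | exact: S_abs].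
exists 0 => // n; rewrite dvd0z; split=> [Sn | /eqP ->].
  apply/negPn/negP => n_neq0; apply: no_pos; exists `|n|%N.
  by split; [rewrite absz_gt0 | exact: S_abs].
by have := S_mul 0 a Sa; rewrite mul0r.
Qed.

Lemma CongP r : 0 <= Cong r /\ forall n, cong_ideal r n <-> (Cong r %| n)%Z.
Proof.
have [||c c_ge0 c_gen] := int_ideal_principal (S := cong_ideal r).
- move=> a b x y ra rb u u_gt1 u_le.
  have := in_poly_idealD x%:P y%:P (ra u u_gt1 u_le) (rb u u_gt1 u_le).
  by rewrite -!polyCM -polyCD.
- by exists 0 => u _ _; exists (fun=> 0); rewrite big1 // => j _; rewrite mulr0.
apply: (epsilon_spec (inhabits 0)
  (fun c => 0 <= c /\ forall n, cong_ideal r n <-> (c %| n)%Z)).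
by exists c.
Qed.

Definition sect_poly (R : nzRingType) (p : {poly R}) (u j : nat) : {poly R} :=
  \poly_(i < size p) p`_(i * u + j).

Lemma coef_sect_poly (R : nzRingType) (p : {poly R}) u j i : (0 < u)%N ->
  (sect_poly p u j)`_i = p`_(i * u + j).
Proof.
move=> u_gt0; rewrite coef_poly; case: ltnP => // le_p_i.
by rewrite nth_default // (leq_trans le_p_i) // (leq_trans (leq_pmulr _ u_gt0)) ?leq_addr.
Qed.

Lemma sect_poly_comp_Xn (R : nzRingType) (p : {poly R}) u : (0 < u)%N ->
  (forall i, ~~ (u %| i)%N -> p`_i = 0) -> sect_poly p u 0 \Po 'X^u = p.
Proof.
move=> u_gt0 p_supp; apply/polyP => k; rewrite coef_comp_poly_Xn //.
case: ifP => [u_dvd_k | /negbT/p_supp -> //].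
by rewrite coef_sect_poly // addn0 divnK.
Qed.

Lemma rpartE r u j : (j < u)%N -> rpart r u j = 'X^j * (sect_poly r u j \Po 'X^u).
Proof.
move=> lt_ju; have u_gt0 : (0 < u)%N by apply: leq_ltn_trans lt_ju.
apply/polyP => k; rewrite coef_poly coefXnM coef_comp_poly_Xn //.
have [lt_kj | le_jk] := ltnP k j.
  by rewrite (modn_small (ltn_trans lt_kj lt_ju)) (ltn_eqF lt_kj) if_same.
have -> : (k %% u == j)%N = (u %| k - j)%N by rewrite -eqn_mod_dvd // (modn_small lt_ju).
have [u_dvd | _] := boolP (u %| k - j)%N; last by rewrite if_same.
rewrite coef_sect_poly // divnK // subnK //.
by case: ltnP => // le_rk; rewrite nth_default.
Qed.

Lemma rpart_sum r u : (0 < u)%N -> r = \sum_(j < u) rpart r u j.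
Proof.
move=> u_gt0; apply/polyP => k; rewrite coef_sum.
under eq_bigr do rewrite coef_poly.
case: (ltnP k (size r)) => lt_kr; last first.
  by rewrite nth_default // big1 // => j _; rewrite if_same.
rewrite -big_mkcond /=; under eq_bigl do rewrite eq_sym.
by rewrite (big_ord1_eq _ (fun=> r`_k)) ltn_pmod.
Qed.

Lemma bad_of_dvd_comp_Xn r (D : {poly rat}) u : (1 < u)%N -> (1 < size D)%N ->
  D \Po 'X^u %| pZtoQ r -> bad r.
Proof.
move=> u_gt1 D_nonconst /dvdpP_rat_int[p [a a_neq0 Dp] [w r_def]].
have u_gt0 := ltnW u_gt1.
have p_supp i : ~~ (u %| i)%N -> p`_i = 0.
  move=> u_ndvd; have /eqP := congr1 (fun q : {poly rat} => q`_i) Dp.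
  rewrite /= coef_comp_poly_Xn // (negbTE u_ndvd) coefZ coef_map eq_sym.
  by rewrite mulf_eq0 (negbTE a_neq0) intr_eq0 => /eqP.
have p_size : size p = size (D \Po 'X^u) by rewrite Dp size_scale // size_rat_int_poly.
have p_nonconst : (1 < size p)%N.
  have : (0 < (size p).-1)%N.
    by rewrite p_size size_comp_poly size_polyXn muln_gt0 u_gt0 andbT -subn1 subn_gt0.
  by case: (size p) => [|[|?]].
exists u.-1, (sect_poly p u 0); rewrite prednK //; split; first by rewrite -ltnS prednK.
split.
  rewrite ltnNge; apply: contraTN p_nonconst => /size1_polyC s_const.
  rewrite -(sect_poly_comp_Xn u_gt0 p_supp) s_const comp_polyC size_polyC.
  by rewrite ltnNge leq_b1.
exists ((r.[0] * r.[1]) *: w); rewrite (sect_poly_comp_Xn u_gt0 p_supp).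
by rewrite -scalerAl [w * p]mulrC -r_def.
Qed.

Section RpartIdeal.

Variables (r : {poly int}) (u : nat).
Hypotheses (u_gt1 : (1 < u)%N) (r0_neq0 : r.[0] != 0).

Let u_gt0 : (0 < u)%N. Proof. exact: ltnW. Qed.

Let E j := if j == 0%N then pZtoQ (sect_poly r u 0) else 'X * pZtoQ (sect_poly r u j).

Let shift j := (if j == 0 then 0 else u - j)%N.

Let comp_E j : (j < u)%N -> E j \Po 'X^u = pZtoQ (rpart r u j) * 'X^(shift j).
Proof.
move=> lt_ju; rewrite /E /shift rpartE // rmorphM /= map_polyXn.
rewrite map_comp_poly /= map_polyXn.
case: eqP => [-> | _]; first by rewrite expr0 mul1r mulr1.
by rewrite comp_polyM comp_polyX [RHS]mulrC mulrA -exprD subnK // ltnW.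
Qed.

Let E0_horner0 : (E 0).[0] = r.[0]%:~R.
Proof. by rewrite /E eqxx horner_coef0 coef_map coef_sect_poly // -horner_coef0. Qed.

Let E0_neq0 : E 0 != 0.
Proof.
by apply: contraNneq r0_neq0 => E0; rewrite -(intr_eq0 rat) -E0_horner0 E0 horner0.
Qed.

Lemma const_in_E_ideal (c : rat) : c != 0 -> in_poly_ideal E u c%:P ->
  exists2 N : int, N != 0 & in_poly_ideal (rpart r u) u N%:P.
Proof.
move=> c_neq0 [x c_def]; apply: (int_const_in_ideal c_neq0).
exists (fun j => (x j \Po 'X^u) * 'X^(shift j)).
rewrite -(comp_polyC c 'X^u) c_def linear_sum; apply: eq_bigr => j _ /=.
by rewrite comp_polyM comp_E // -mulrA [_ * (x j \Po _)]mulrC.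
Qed.

Lemma bad_of_E_common_divisor (D : {poly rat}) : (1 < size D)%N ->
  (forall j, (j < u)%N -> D %| E j) -> bad r.
Proof.
move=> D_nonconst D_dvd; apply: (bad_of_dvd_comp_Xn u_gt1 D_nonconst).
have D_coprime_X : coprimep D 'X.
  rewrite coprimepX; apply/negP => /(root_dvdp (D_dvd 0%N u_gt0)).
  by rewrite /root E0_horner0 intr_eq0; apply/negP.
rewrite (rpart_sum r u_gt0) rmorph_sum /=.
apply: (big_ind (fun q => D \Po 'X^u %| q)) => [|p q|j _]; first exact: dvdp0.
  exact: dvdp_add.
rewrite rpartE // rmorphM /= map_polyXn map_comp_poly /= map_polyXn.
apply/dvdp_mull/dvdp_comp_poly; have := D_dvd j (ltn_ord j); rewrite /E.
by case: eqP => [-> // | _]; rewrite Gauss_dvdpr.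
Qed.

Lemma rpart_ideal_nonzero : ~ bad r ->
  exists2 N : int, N != 0 & in_poly_ideal (rpart r u) u N%:P.
Proof.
move=> not_bad; have [G G_ideal G_dvd] := bezout_common_divisor E u.
have G_neq0 : G != 0.
  by apply: contraNneq E0_neq0 => G0; rewrite -dvd0p -G0 G_dvd.
have [G_const | G_nonconst] := leqP (size G) 1; last first.
  by case: not_bad; apply: (bad_of_E_common_divisor G_nonconst).
apply: (@const_in_E_ideal G`_0); last by rewrite -size1_polyC.
by apply: contraNneq G_neq0 => G00; rewrite (size1_polyC G_const) G00.
Qed.

End RpartIdeal.

Lemma cong_ideal_nonzero r : r.[0] != 0 -> ~ bad r ->
  exists2 N : int, N != 0 & cong_ideal r N.
Proof.
move=> r0_neq0 not_bad.
suff [N N_neq0 N_ideal] : exists2 N : int, N != 0 & forall u, (1 < u)%N ->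
    (u <= (size r).-1 + 1)%N -> in_poly_ideal (rpart r u) u N%:P.
  by exists N.
elim: ((size r).-1 + 1)%N => [|m [N N_neq0 N_ideal]].
  by exists 1 => // u /leq_trans u_gt1 /u_gt1.
have [m_gt0 | m_le0] := ltnP 1 m.+1; last first.
  by exists N => // u u_gt1 u_le; have := leq_trans u_gt1 (leq_trans u_le m_le0).
have [n n_neq0 n_ideal] := rpart_ideal_nonzero m_gt0 r0_neq0 not_bad.
exists (n * N); first by rewrite mulf_neq0.
move=> u u_gt1; rewrite polyCM leq_eqVlt => /orP[/eqP -> | lt_um].
  by rewrite mulrC; apply: in_poly_idealMl.
exact/in_poly_idealMl/N_ideal.
Qed.

Lemma Cong_neq0 r : r.[0] != 0 -> good r -> Cong r != 0.
Proof.
move=> r0_neq0 /(cong_ideal_nonzero r0_neq0)[N N_neq0 /(CongP r).2].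
by apply: contraTneq => ->; rewrite dvd0z.
Qed.

Lemma good_horner01_neq0 r : good r -> r.[0] * r.[1] != 0.
Proof.
move=> good_r; apply/eqP => r01; apply: good_r.
exists 1%N, 'X; rewrite size_polyX r01 scale0r; do 2!split => //.
by exists 0; rewrite mul0r.
Qed.

Lemma Discr_star_neq0 r : r != 0 -> Discr_star r != 0.
Proof.
move=> r_neq0; rewrite /Discr_star; case: ifP => [r_const | _].
  by rewrite intr_eq0; apply: contraNneq r_neq0 => r0; rewrite (size1_polyC r_const) r0.
rewrite !mulf_neq0 ?expf_neq0 ?intr_eq0 ?lead_coef_eq0 ?pnatr_eq0 -?lt0n ?fact_gt0 //.
rewrite prodf_seq_neq0; apply/allP => x _; rewrite prodf_seq_neq0.
by apply/allP => y _; apply/implyP => neq_xy; rewrite expf_neq0 // subr_eq0.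
Qed.

Lemma Prod_star_neq0 r : Prod_star r != 0.
Proof.
rewrite /Prod_star; case: ifP => [_ | r_nonconst]; first exact: oner_neq0.
have r_neq0 : r != 0 by apply: contraFneq r_nonconst => ->; rewrite size_poly0.
rewrite mulf_neq0 ?expf_neq0 ?intr_eq0 ?lead_coef_eq0 // prodf_seq_neq0.
by apply/allP => x _; rewrite prodf_seq_neq0; apply/allP => y _; apply/implyP.
Qed.

Theorem proposition1p9 (r : {poly int}) :
  good r ->
  (r.[1])%:~R * (Cong r)%:~R * Discr_star r * Prod_star r != 0 :> algC.
Proof.
move=> good_r; have := good_horner01_neq0 good_r.
rewrite mulf_eq0 negb_or => /andP[r0_neq0 r1_neq0].
have r_neq0 : r != 0 by apply: contraNneq r1_neq0 => ->; rewrite horner0.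
by rewrite !mulf_neq0 ?intr_eq0 ?Cong_neq0 ?Discr_star_neq0 ?Prod_star_neq0.
Qed.
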